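(* Let $\mathcal{X}\subseteq\mathbb{R}^d$ be a nonempty closed convex set and let $F\colon\mathcal{X}\to\mathbb{R}^d$ be monotone and $\beta$-smooth with respect to the $\ell_2$-norm. Consider the deterministic setting, i.e. $\widehat{F(x)}=F(x)$ for all queried points. Run Algorithm AdaPEG-Unbounded (described in the context) with parameters $\gamma_0>0$, $\eta>0$, and let $\bar x_T$ be its output. Let $D>0$ be any fixed value. Then \[\mathrm{Err}_D(\bar x_T)\le\frac1T\left(\frac{1}{2\gamma_0}\frac{D^4}{\eta^2}\beta^2+\frac{\gamma_0}{2}D^2+\frac{8}{\gamma_0}\beta^2\eta^2+\frac1{\gamma_0}\|F(x_\tau)-F(x_{\tau-1})\|^2+\frac1{\gamma_0}\|F(x_{\tau-1})-F(x_{\tau-2})\|^2\right),\] where $\tau$ is the last iteration $t$ such that $\gamma_{t-2}\le2\sqrt2\beta$. In particular, setting $\eta=\Theta(D)$ and $\gamma_0=1$, \[\mathrm{Err}_D(\bar x_T)\le O\left(\frac{\beta^2D^2+\|F(x_\tau)-F(x_{\tau-1})\|^2+\|F(x_{\tau-1})-F(x_{\tau-2})\|^2}{T}\right).\]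
   Context: $\|\cdot\|$ is the Euclidean norm. Monotone: $\langle F(x)-F(y),x-y\rangle\ge0$; $\beta$-smooth: $\|F(x)-F(y)\|\le\beta\|x-y\|$. $\mathrm{Err}_D(x)=\sup\{\langle F(y),x-y\rangle: y\in\mathcal{X},\ \|y-x_0\|\le D\}$ with $x_0$ the initial point. Algorithm AdaPEG-Unbounded: $x_0=z_0\in\mathcal{X}$, $\gamma_{-1}=0$. For $t=1,\dots,T$: $x_t=\arg\min_{u\in\mathcal{X}}\{\langle F(x_{t-1}),u\rangle+\tfrac12\gamma_{t-2}\|u-z_{t-1}\|^2+\tfrac12(\gamma_{t-1}-\gamma_{t-2})\|u-x_0\|^2\}$; $z_t=\arg\min_{u\in\mathcal{X}}\{\langle F(x_t),u\rangle+\tfrac12\gamma_{t-2}\|u-z_{t-1}\|^2+\tfrac12(\gamma_{t-1}-\gamma_{t-2})\|u-x_0\|^2\}$; $\gamma_t=\frac1\eta\sqrt{\eta^2\gamma_0^2+\sum_{s=1}^t\|F(x_s)-F(x_{s-1})\|^2}$. Output $\bar x_T=\frac1T\sum_{t=1}^Tx_t$. *)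

From HB Require Import structures.
From mathcomp Require Import all_boot all_order all_algebra.
From mathcomp Require Import all_classical all_reals all_analysis.
Set Implicit Arguments. Unset Strict Implicit. Unset Printing Implicit Defensive.
Import Order.TTheory GRing.Theory Num.Theory.
Import numFieldNormedType.Exports.
Local Open Scope classical_set_scope.
Local Open Scope ring_scope.

Section Defs.
Variables (R : realType) (d : nat).
Notation vec := 'rV[R]_d.

Definition dotp (u v : vec) : R := \sum_(i < d) u ord0 i * v ord0 i.
Definition enorm (u : vec) : R := Num.sqrt (dotp u u).

Definition monotone_on (X : set vec) (F : vec -> vec) : Prop :=
  forall x y, X x -> X y -> 0 <= dotp (F x - F y) (x - y).

Definition smooth_on (X : set vec) (F : vec -> vec) (beta : R) : Prop :=
  forall x y, X x -> X y -> enorm (F x - F y) <= beta * enorm (x - y).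

Definition ErrD (X : set vec) (F : vec -> vec) (x0 : vec) (D : R) (x : vec) : R :=
  sup [set dotp (F y) (x - y) | y in [set y | X y /\ enorm (y - x0) <= D]].

Definition gam (F : vec -> vec) (x : nat -> vec) (eta g0 : R) (t : nat) : R :=
  eta^-1 * Num.sqrt (eta ^+ 2 * g0 ^+ 2
    + \sum_(1 <= s < t.+1) enorm (F (x s) - F (x s.-1)) ^+ 2).

(* gm2 t = gamma_{t-2} for t >= 1, with gamma_{-1} = 0 *)
Definition gm2 (F : vec -> vec) (x : nat -> vec) (eta g0 : R) (t : nat) : R :=
  if t is t'.+2 then gam F x eta g0 t' else 0.

Definition step_obj (F : vec -> vec) (x z : nat -> vec) (eta g0 : R) (t : nat)
  (g u : vec) : R :=
  dotp g u + 2^-1 * gm2 F x eta g0 t * enorm (u - z t.-1) ^+ 2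
  + 2^-1 * (gam F x eta g0 t.-1 - gm2 F x eta g0 t) * enorm (u - x 0%N) ^+ 2.

Definition is_argmin (X : set vec) (phi : vec -> R) (v : vec) : Prop :=
  X v /\ forall u, X u -> phi v <= phi u.

Definition AdaPEG_iterates (X : set vec) (F : vec -> vec) (eta g0 : R) (T : nat)
  (x z : nat -> vec) : Prop :=
  z 0%N = x 0%N /\ X (x 0%N) /\
  forall t, (1 <= t <= T)%N ->
    is_argmin X (step_obj F x z eta g0 t (F (x t.-1))) (x t) /\
    is_argmin X (step_obj F x z eta g0 t (F (x t))) (z t).

Definition xbar (x : nat -> vec) (T : nat) : vec :=
  (T%:R)^-1 *: \sum_(1 <= t < T.+1) x t.

Definition tau (F : vec -> vec) (x : nat -> vec) (eta g0 beta : R) (T : nat) : nat :=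
  \max_(1 <= t < T.+1 | gm2 F x eta g0 t <= 2 * Num.sqrt 2 * beta) t.

End Defs.

From HB Require Import structures.
From mathcomp Require Import all_boot all_order all_algebra.
From mathcomp Require Import all_classical all_reals all_analysis.
From mathcomp Require Import ring lra.
Import Order.TTheory GRing.Theory Num.Theory.
Import numFieldNormedType.Exports.
Local Open Scope classical_set_scope.
Local Open Scope ring_scope.
Set Implicit Arguments. Unset Strict Implicit. Unset Printing Implicit Defensive.

(* Both x_t and z_t minimise the same proximal objective, with linear terms
   F(x_{t-1}) and F(x_t).  Combining their first-order conditions bounds
   <F(x_t), x_t - u> by a telescoping potential plus the prediction error
   ||F(x_t) - F(x_{t-1})||^2 / (2 gamma_{t-1}), minus a movement term
   gamma_{t-2} ||x_t - x_{t-1}||^2 / 4 (stability of the proximal step controls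
   ||x_{t-1} - z_{t-1}||).  Monotonicity turns the averaged gap at u into this
   regret.  The diameter term gamma_{T-1} D^2 / 2 exceeds gamma_0 D^2 / 2 by at most
   sqrt(sum ||F(x_t) - F(x_{t-1})||^2) D^2 / (2 eta), which smoothness and AM-GM
   trade against the movement terms.  Once gamma_{t-2} > 2 sqrt 2 beta the movement
   term dominates the prediction error, so only the errors up to tau remain; their
   sum is eta^2 (gamma_{tau-2}^2 - gamma_0^2) plus its last two terms, hence at most
   8 beta^2 eta^2 plus those two terms. *)

Local Notation sqn u := (dotp u u).

Section InnerProduct.
Variables (R : realType) (d : nat).
Implicit Types (g u v w : 'rV[R]_d) (a : R).

Lemma dotpC u v : dotp u v = dotp v u.
Proof. by apply: eq_bigr => i _; rewrite mulrC. Qed.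

Lemma dotpDl u v w : dotp (u + v) w = dotp u w + dotp v w.
Proof. by rewrite /dotp -big_split; apply: eq_bigr => i _; rewrite !mxE mulrDl. Qed.

Lemma dotpZl a u w : dotp (a *: u) w = a * dotp u w.
Proof. by rewrite /dotp mulr_sumr; apply: eq_bigr => i _; rewrite !mxE mulrA. Qed.

Lemma dotpNl u w : dotp (- u) w = - dotp u w.
Proof. by rewrite -scaleN1r dotpZl mulN1r. Qed.

Lemma dotpBl u v w : dotp (u - v) w = dotp u w - dotp v w.
Proof. by rewrite dotpDl dotpNl. Qed.

Lemma dotpDr u v w : dotp w (u + v) = dotp w u + dotp w v.
Proof. by rewrite dotpC dotpDl !(dotpC w). Qed.

Lemma dotpZr a u w : dotp w (a *: u) = a * dotp w u.
Proof. by rewrite dotpC dotpZl dotpC. Qed.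

Lemma dotpBr u v w : dotp w (u - v) = dotp w u - dotp w v.
Proof. by rewrite !(dotpC w) dotpBl. Qed.

Lemma dotpNr u w : dotp w (- u) = - dotp w u.
Proof. by rewrite dotpC dotpNl dotpC. Qed.

Lemma dotp0l w : dotp 0 w = 0.
Proof. by rewrite -(scale0r 0) dotpZl mul0r. Qed.

Lemma dotp_sumr I (r : seq I) (P : pred I) (f : I -> 'rV[R]_d) w :
  dotp w (\sum_(i <- r | P i) f i) = \sum_(i <- r | P i) dotp w (f i).
Proof.
elim/big_rec2: _ => [|i y1 y2 _ <-]; first by rewrite dotpC dotp0l.
by rewrite dotpDr.
Qed.

Lemma dotpp_ge0 u : 0 <= sqn u.
Proof. by apply: sumr_ge0 => i _; rewrite -expr2 sqr_ge0. Qed.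

Lemma enorm_ge0 u : 0 <= enorm u.
Proof. exact: sqrtr_ge0. Qed.

Lemma enorm_sqr u : enorm u ^+ 2 = sqn u.
Proof. by rewrite sqr_sqrtr // dotpp_ge0. Qed.

Lemma sqn_subC u v : sqn (u - v) = sqn (v - u).
Proof. by rewrite -opprB dotpNl dotpC dotpNl opprK. Qed.

Lemma sqn_addZ u w a : sqn (u + a *: w) = sqn u + 2 * a * dotp u w + a ^+ 2 * sqn w.
Proof. by rewrite !(dotpDl, dotpDr, dotpZl, dotpZr) (dotpC w u); ring. Qed.

Lemma sqn_sub_le u v : sqn (u - v) <= 2 * sqn u + 2 * sqn v.
Proof.
have := dotpp_ge0 (u + v).
rewrite !(dotpBl, dotpBr, dotpDl, dotpDr) (dotpC v u); lra.
Qed.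

Lemma sqn_le_of_dotp g w (c : R) :
  0 <= c -> c * sqn w <= dotp g w -> c ^+ 2 * sqn w <= sqn g.
Proof.
move=> c0 le_cw; have := dotpp_ge0 (g + (- c) *: w); rewrite sqn_addZ.
have : c ^+ 2 * sqn w <= c * dotp g w by rewrite expr2 -mulrA ler_wpM2l.
lra.
Qed.

Lemma three_point u v w :
  dotp (u - v) (w - u) = (sqn (w - v) - sqn (w - u) - sqn (u - v)) / 2.
Proof. by rewrite !(dotpBl, dotpBr, dotpDl, dotpDr) (dotpC u w) (dotpC v w) (dotpC v u); field. Qed.

Lemma young_dotp g w (c : R) : 0 < c -> dotp g w - c / 2 * sqn w <= sqn g / (2 * c).
Proof.
move=> c0; have := dotpp_ge0 (g + (- c) *: w); rewrite sqn_addZ => sq_ge0.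
rewrite -subr_ge0.
have -> : sqn g / (2 * c) - (dotp g w - c / 2 * sqn w) =
          (sqn g + 2 * - c * dotp g w + (- c) ^+ 2 * sqn w) / (2 * c).
  by field; rewrite gt_eqF.
by rewrite divr_ge0 // mulr_ge0 // ltW.
Qed.

Lemma dotp_xbar w u (x : nat -> 'rV[R]_d) T :
  (0 < T)%N -> dotp w (xbar x T - u) = T%:R^-1 * \sum_(1 <= t < T.+1) dotp w (x t - u).
Proof.
move=> T_gt0; rewrite /xbar dotpBr dotpZr dotp_sumr.
under [in RHS]eq_bigr do rewrite dotpBr.
rewrite sumrB sumr_const_nat subn1 /= -mulr_natr; field.
by rewrite pnatr_eq0 -lt0n.
Qed.

End InnerProduct.

Lemma amgm_bound (R : realFieldType) (k c y Q beta : R) :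
  0 < k -> 0 <= c -> 0 <= y -> 0 <= Q -> y ^+ 2 <= beta ^+ 2 * Q ->
  y * c / 2 <= c ^+ 2 * beta ^+ 2 / (2 * k) + k * Q / 8.
Proof.
move=> k0 c0 y0 Q0; case: (eqVneq beta 0) => [->|b0] yQ.
  have -> : y = 0 by move: yQ; rewrite !expr2 !mul0r; nra.
  have := divr_ge0 (mulr_ge0 (ltW k0) Q0) (ler0n R 8); lra.
have b2 : 0 < beta ^+ 2 by rewrite exprn_even_gt0.
have key : 4 * k * c * y * beta ^+ 2 <= beta ^+ 2 * (4 * c ^+ 2 * beta ^+ 2 + k ^+ 2 * Q).
  have := sqr_ge0 (2 * c * beta ^+ 2 - k * y); nra.
rewrite -subr_ge0.
have -> : c ^+ 2 * beta ^+ 2 / (2 * k) + k * Q / 8 - y * c / 2 =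
  (4 * c ^+ 2 * beta ^+ 2 + k ^+ 2 * Q - 4 * k * c * y) / (8 * k) by field; rewrite gt_eqF.
apply: divr_ge0; last by rewrite mulr_ge0 // ltW.
rewrite subr_ge0 -(ler_pM2l b2) -mulrA; move: key; rewrite !mulrA; nra.
Qed.

Lemma ge0_of_quadratic_ge0 (R : realFieldType) (G c : R) : 0 <= c ->
  (forall s, 0 < s -> s <= 1 -> 0 <= s * G + s ^+ 2 * c) -> 0 <= G.
Proof.
move=> c0 quad_ge0; rewrite leNgt; apply/negP => G0.
have den : 0 < - G + c by rewrite ltr_wpDr // oppr_gt0.
pose s := - G / (- G + c).
have s0 : 0 < s by rewrite divr_gt0 // oppr_gt0.
have s1 : s <= 1 by rewrite ler_pdivrMr // mul1r lerDl.
have sE : s * (- G + c) = - G by rewrite divfK // gt_eqF.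
have := quad_ge0 s s0 s1.
rewrite expr2 -mulrA -mulrDr pmulr_rge0 //; nra.
Qed.

Lemma sqr_2sqrt2 (R : realType) (b : R) : (2 * Num.sqrt 2 * b) ^+ 2 = 8 * b ^+ 2.
Proof. rewrite !exprMn sqr_sqrtr //; lra. Qed.

Section Prox.
Variables (R : realType) (d : nat).
Implicit Types (g p q u v w x z : 'rV[R]_d) (a b : R).

Definition prox_obj g p q a b u :=
  dotp g u + 2^-1 * a * enorm (u - p) ^+ 2 + 2^-1 * b * enorm (u - q) ^+ 2.

Definition prox_vi g p q a b v u :=
  0 <= dotp (g + a *: (v - p) + b *: (v - q)) (u - v).

Lemma prox_obj_step g p q a b v w s :
  prox_obj g p q a b (v + s *: w) - prox_obj g p q a b v =
  s * dotp (g + a *: (v - p) + b *: (v - q)) w + s ^+ 2 * ((a + b) / 2 * sqn w).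
Proof.
rewrite /prox_obj !enorm_sqr ![v + s *: w - _]addrAC !sqn_addZ.
by rewrite dotpDr dotpZr (dotpDl (g + _)) (dotpDl g) !dotpZl; field.
Qed.

Lemma prox_argmin_vi (X : set 'rV[R]_d) g p q a b v :
  convex_set X -> 0 <= a -> 0 <= b -> is_argmin X (prox_obj g p q a b) v ->
  forall u, X u -> prox_vi g p q a b v u.
Proof.
move=> cX a0 b0 [Xv vmin] u Xu.
apply: (ge0_of_quadratic_ge0 (c := (a + b) / 2 * sqn (u - v))) => [|s s0 s1].
  by rewrite mulr_ge0 ?dotpp_ge0 // divr_ge0 ?addr_ge0.
rewrite -prox_obj_step subr_ge0; apply: vmin.
have := cX u v (Itv01 (ltW s0) s1); rewrite !inE => /(_ Xu Xv).
suff -> : v + s *: (u - v) = s *: u + (1 - s) *: v by [].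
by rewrite scalerBl scale1r scalerBr addrCA.
Qed.

Lemma prox_vi_stable (g0 g1 : 'rV[R]_d) p q a b x z : 0 <= a + b ->
  prox_vi g1 p q a b z x -> prox_vi g0 p q a b x z ->
  (a + b) ^+ 2 * sqn (x - z) <= sqn (g1 - g0).
Proof.
rewrite /prox_vi => ab Hz Hx; apply: sqn_le_of_dotp => //.
have := addr_ge0 Hz Hx; rewrite -(opprB x z) dotpNr.
by rewrite !(dotpBl, dotpDl, dotpZl); lra.
Qed.

Lemma prox_vi_gap (g0 g1 : 'rV[R]_d) p q a b x z u :
  prox_vi g1 p q a b z u -> prox_vi g0 p q a b x z ->
  dotp g1 (x - u) <= a / 2 * sqn (u - p) - (a + b) / 2 * sqn (u - z)
     + b / 2 * sqn (u - q) - (a + b) / 2 * sqn (x - z) - a / 2 * sqn (x - p)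
     - b / 2 * sqn (x - q) + dotp (g1 - g0) (x - z).
Proof.
rewrite /prox_vi (dotpDl (g1 + _)) (dotpDl g1) (dotpDl (g0 + _)) (dotpDl g0) !dotpZl.
rewrite !three_point (sqn_subC z x).
have -> : dotp g1 (x - u) = dotp (g1 - g0) (x - z) - dotp g0 (z - x) - dotp g1 (u - z).
  by rewrite !dotpBr !dotpBl; ring.
lra.
Qed.

End Prox.

Lemma telescope_sumr_pred (V : zmodType) (f : nat -> V) n :
  \sum_(1 <= t < n.+1) (f t.-1 - f t) = f 0%N - f n.
Proof.
rewrite big_add1 -opprB -(telescope_sumr f (leq0n n)) -sumrN.
by apply: eq_bigr => i _; rewrite opprB.
Qed.

Lemma bigmax_nat_range (P : pred nat) n (m := (\max_(1 <= t < n.+1 | P t) t)%N) :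
  (0 < n)%N -> P 1%N ->
  [/\ (0 < m <= n)%N, P m & forall t, (0 < t <= n)%N -> P t -> (t <= m)%N].
Proof.
move=> n1 P1.
have m_max t : (0 < t <= n)%N -> P t -> (t <= m)%N.
  by move=> tn Pt; apply: (leq_bigmax_seq t) => //; rewrite mem_index_iota ltnS.
have m_le : (m <= n)%N.
  by apply/bigmax_leqP_seq => i; rewrite mem_index_iota ltnS => /andP[_ ->].
have m_ge : (0 < m)%N by apply: m_max; rewrite ?leqnn.
have : m = 0%N \/ P m.
  apply: (big_ind (fun k => k = 0%N \/ P k)) => [|i j Pi Pj|i Pi]; [by left | | by right].
  by rewrite /maxn; case: ifP.
by case=> [m0|Pm]; [by rewrite m0 in m_ge | rewrite m_ge m_le].
Qed.

Section AdaPEG.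
Variables (R : realType) (d : nat) (X : set 'rV[R]_d) (F : 'rV[R]_d -> 'rV[R]_d)
  (beta g0 eta : R) (T : nat) (x z : nat -> 'rV[R]_d).
Hypotheses (convX : convex_set X) (beta_ge0 : 0 <= beta) (smoothF : smooth_on X F beta)
  (g0_gt0 : 0 < g0) (eta_gt0 : 0 < eta) (T_gt0 : (0 < T)%N)
  (iter : AdaPEG_iterates X F eta g0 T x z).

Local Notation gamma t := (gam F x eta g0 t).
Local Notation a t := (gm2 F x eta g0 t).
Local Notation dF t := (F (x t) - F (x t.-1)).

Definition sqvar t := \sum_(1 <= s < t.+1) sqn (dF s).

Lemma sqvar_ge0 t : 0 <= sqvar t.
Proof. by apply: sumr_ge0 => s _; apply: dotpp_ge0. Qed.

Lemma sqvar_homo s t : (s <= t)%N -> sqvar s <= sqvar t.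
Proof.
move=> st; rewrite /sqvar [leRHS](big_cat_nat (n := s.+1)) //= ?ltnS // lerDl.
by apply: sumr_ge0 => i _; apply: dotpp_ge0.
Qed.

Lemma gam_sqr t : eta ^+ 2 * gamma t ^+ 2 = eta ^+ 2 * g0 ^+ 2 + sqvar t.
Proof.
have e : \sum_(1 <= s < t.+1) enorm (dF s) ^+ 2 = sqvar t.
  by apply: eq_bigr => s _; rewrite enorm_sqr.
rewrite /gam e exprMn mulrA -exprMn mulfV ?gt_eqF // expr1n mul1r sqr_sqrtr //.
by rewrite addr_ge0 ?sqvar_ge0 // mulr_ge0 // sqr_ge0.
Qed.

Lemma gam_ge0 t : 0 <= gamma t.
Proof. by rewrite mulr_ge0 ?sqrtr_ge0 // invr_ge0 ltW. Qed.

Lemma gam_sqr_homo s t : (s <= t)%N -> gamma s ^+ 2 <= gamma t ^+ 2.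
Proof.
move=> st; rewrite -(ler_pM2l (exprn_gt0 2 eta_gt0)) !gam_sqr lerD2l.
exact: sqvar_homo.
Qed.

Lemma gam_ge t : g0 <= gamma t.
Proof.
have : eta ^+ 2 * g0 ^+ 2 <= eta ^+ 2 * gamma t ^+ 2 by rewrite gam_sqr lerDl sqvar_ge0.
by rewrite ler_pM2l ?exprn_gt0 // ler_sqr ?nnegrE ?gam_ge0 ?(ltW g0_gt0).
Qed.

Lemma gam_gt0 t : 0 < gamma t.
Proof. exact: lt_le_trans (gam_ge t). Qed.

Lemma gam_homo s t : (s <= t)%N -> gamma s <= gamma t.
Proof. by move/gam_sqr_homo; rewrite ler_sqr ?nnegrE ?gam_ge0. Qed.

Lemma gam0 : gamma 0 = g0.
Proof.
apply/eqP; rewrite -(eqrXn2 (_ : 0 < 2)%N) ?gam_ge0 ?ltW //; apply/eqP.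
apply: (mulfI (expf_neq0 2 (lt0r_neq0 eta_gt0))).
by rewrite gam_sqr /sqvar big_geq // addr0.
Qed.

Lemma gam_excess_sqr t : (eta * (gamma t - g0)) ^+ 2 <= sqvar t.
Proof.
have excess_ge0 : 0 <= gamma t - g0 by rewrite subr_ge0 gam_ge.
have := mulr_ge0 (mulr_ge0 (sqr_ge0 eta) (ltW g0_gt0)) excess_ge0.
have := gam_sqr t; lra.
Qed.

Definition pred_err t := sqn (dF t) / (2 * gamma t.-1).

Definition move_sq t := sqn (x t - x t.-1).

Lemma pred_err_ge0 t : 0 <= pred_err t.
Proof. by rewrite divr_ge0 ?dotpp_ge0 // mulr_ge0 // gam_ge0. Qed.

Lemma pred_err0 : pred_err 0 = 0.
Proof. by rewrite /pred_err subrr dotp0l mul0r. Qed.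

Lemma move_sq_ge0 t : 0 <= move_sq t.
Proof. exact: dotpp_ge0. Qed.

Lemma gm2_ge0 t : 0 <= a t.
Proof. by case: t => [|[|t]] //; apply: gam_ge0. Qed.

Lemma gm2_succ t : (0 < t)%N -> a t.+1 = gamma t.-1.
Proof. by case: t. Qed.

Lemma gm2_le t : (0 < t)%N -> a t <= gamma t.-1.
Proof. by case: t => [|[|t]] // _; [apply: gam_ge0 | apply: gam_homo]. Qed.

Lemma iterate_in t : (t <= T)%N -> X (x t).
Proof.
case: iter => _ [Xx0 argmins]; case: t => // t tT.
by have [[]] := argmins t.+1 tT.
Qed.

(* [step_obj F x z eta g0 t g] is [prox_obj g (z t.-1) (x 0) (a t) (gamma t.-1 - a t)]
   by conversion. *)
Lemma iterate_vi t : (0 < t <= T)%N ->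
  prox_vi (F (x t.-1)) (z t.-1) (x 0) (a t) (gamma t.-1 - a t) (x t) (z t) /\
  forall u, X u -> prox_vi (F (x t)) (z t.-1) (x 0) (a t) (gamma t.-1 - a t) (z t) u.
Proof.
move=> tr; case: iter => _ [_ /(_ t tr) [xmin zmin]].
have t_gt0 : (0 < t)%N by case/andP: tr.
have a0 := gm2_ge0 t; have b0 : 0 <= gamma t.-1 - a t by rewrite subr_ge0 gm2_le.
split; last exact: prox_argmin_vi zmin.
exact: prox_argmin_vi xmin _ zmin.1.
Qed.

Lemma sqn_dF_le t : (t <= T)%N -> sqn (dF t) <= beta ^+ 2 * move_sq t.
Proof.
move=> tT; rewrite /move_sq -!enorm_sqr -exprMn lerXn2r ?nnegrE ?mulr_ge0 ?enorm_ge0 //.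
by apply: smoothF; apply: iterate_in; rewrite // (leq_trans (leq_pred t)).
Qed.

Lemma iterate_gap_xz t : (t <= T)%N -> gamma t.-1 / 2 * sqn (x t - z t) <= pred_err t.
Proof.
case: t => [|t] tT.
  by case: iter => -> _; rewrite subrr dotp0l mulr0 pred_err_ge0.
have [vi_x vi_z] := @iterate_vi t.+1 tT.
have b0 : 0 <= gamma t - a t.+1 by rewrite subr_ge0 (gm2_le (ltn0Sn t)).
have := prox_vi_stable (addr_ge0 (gm2_ge0 t.+1) b0) (vi_z _ (iterate_in tT)) vi_x.
have g2_gt0 : 0 < 2 * gamma t by rewrite mulr_gt0 ?gam_gt0.
rewrite addrC subrK /pred_err ler_pdivlMr //=; lra.
Qed.

(* [gamma t.-2] is gamma_0 at t = 1 (truncated subtraction), whereas [a 1] = 0. *)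
Lemma prox_weights_ge t v : (0 < t)%N ->
  gamma t.-2 / 2 * sqn (v - z t.-1)
    <= a t / 2 * sqn (v - z t.-1) + (gamma t.-1 - a t) / 2 * sqn (v - x 0).
Proof.
case: t => [|[|t]] // _ /=.
  by case: iter => -> _; rewrite gam0 // !mul0r add0r subr0.
by rewrite lerDl mulr_ge0 ?dotpp_ge0 // divr_ge0 // subr_ge0 gam_homo.
Qed.

Definition potential (D : R) u t := a t.+1 / 2 * (sqn (u - z t) - D ^+ 2) + pred_err t.

Lemma step_regret D u t : (0 < t <= T)%N -> X u -> sqn (u - x 0) <= D ^+ 2 ->
  dotp (F (x t)) (x t - u) <= potential D u t.-1 - potential D u t
    + (2 * pred_err t - gamma t.-2 * move_sq t / 4).
Proof.
move=> tr Xu Du; have /andP[t_gt0 tT] := tr.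
have [vi_x vi_z] := iterate_vi tr.
have gap := prox_vi_gap (vi_z u Xu) vi_x.
have young := young_dotp (dF t) (x t - z t) (gam_gt0 t.-1).
have b0 : 0 <= gamma t.-1 - a t by rewrite subr_ge0 gm2_le.
have far : (gamma t.-1 - a t) / 2 * sqn (u - x 0) <= (gamma t.-1 - a t) / 2 * D ^+ 2.
  by rewrite ler_wpM2l // divr_ge0.
have weights := prox_weights_ge (x t) t_gt0.
have split_move : gamma t.-2 * move_sq t / 4 <=
    gamma t.-2 / 2 * sqn (x t - z t.-1) + gamma t.-2 / 2 * sqn (x t.-1 - z t.-1).
  have := sqn_sub_le (x t - z t.-1) (x t.-1 - z t.-1).
  rewrite opprB addrA subrK -/(move_sq t) => h.
  have := ler_wpM2l (divr_ge0 (gam_ge0 t.-2) (ler0n R 4)) h; lra.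
have prev := iterate_gap_xz (leq_trans (leq_pred t) tT).
rewrite /potential prednK // gm2_succ //.
rewrite -/(pred_err t) in young; lra.
Qed.

Lemma regret_bound D u : X u -> sqn (u - x 0) <= D ^+ 2 ->
  \sum_(1 <= t < T.+1) dotp (F (x t)) (x t - u) <=
    gamma T.-1 / 2 * D ^+ 2
    + \sum_(1 <= t < T.+1) (2 * pred_err t - gamma t.-2 * move_sq t / 4).
Proof.
move=> Xu Du.
apply: (@le_trans _ _ (\sum_(1 <= t < T.+1) (potential D u t.-1 - potential D u t
                        + (2 * pred_err t - gamma t.-2 * move_sq t / 4)))).
  by apply: ler_sum_nat => t tr; apply: step_regret.
rewrite big_split /= telescope_sumr_pred lerD2r /potential pred_err0 (gm2_succ T_gt0).
have a1 : a 1 = 0 by [].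
have := mulr_ge0 (gam_ge0 T.-1) (dotpp_ge0 (u - z T)); have := pred_err_ge0 T.
rewrite a1; lra.
Qed.

Lemma threshold_ge0 : 0 <= 2 * Num.sqrt 2 * beta.
Proof. by rewrite !mulr_ge0 ?sqrtr_ge0. Qed.

Local Notation tau_T := (tau F x eta g0 beta T).

Lemma tau_spec : [/\ (0 < tau_T <= T)%N, a tau_T <= 2 * Num.sqrt 2 * beta
  & forall t, (0 < t <= T)%N -> a t <= 2 * Num.sqrt 2 * beta -> (t <= tau_T)%N].
Proof. exact: bigmax_nat_range threshold_ge0. Qed.

Lemma sqvar_le_of_gm2 t : (0 < t)%N -> a t <= 2 * Num.sqrt 2 * beta ->
  sqvar t <= 8 * beta ^+ 2 * eta ^+ 2 + sqn (dF t) + sqn (dF t.-1).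
Proof.
have h0 := mulr_ge0 (mulr_ge0 (ler0n R 8) (sqr_ge0 beta)) (sqr_ge0 eta).
case: t => [|[|t]] // _ ha.
  rewrite /sqvar big_nat_recr //= big_geq // add0r; have := dotpp_ge0 (dF 0); lra.
rewrite /sqvar 2?big_nat_recr //= -/(sqvar t).
have : gamma t ^+ 2 <= 8 * beta ^+ 2.
  by rewrite -sqr_2sqrt2 ler_sqr ?nnegrE ?gam_ge0 ?threshold_ge0.
move/(ler_wpM2l (sqr_ge0 eta)); have := gam_sqr t.
have := mulr_ge0 (sqr_ge0 eta) (sqr_ge0 g0); lra.
Qed.

Lemma pred_err_tail t : (0 < t <= T)%N -> 2 * Num.sqrt 2 * beta < a t ->
  2 * pred_err t <= gamma t.-2 * move_sq t / 8.
Proof.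
case: t => [|[|t]] //= tT hlt.
  by rewrite ltNge threshold_ge0 in hlt.
have g1_gt0 := gam_gt0 t.+1.
have hP := move_sq_ge0 t.+2.
have beta_gam : 8 * beta ^+ 2 * move_sq t.+2 <= gamma t ^+ 2 * move_sq t.+2.
  by rewrite ler_wpM2r // -sqr_2sqrt2 ler_sqr ?nnegrE ?threshold_ge0 ?gam_ge0 // ltW.
have gam_gam : gamma t ^+ 2 * move_sq t.+2 <= gamma t * gamma t.+1 * move_sq t.+2.
  by rewrite expr2 ler_wpM2r // ler_wpM2l ?gam_ge0 // gam_homo.
have := sqn_dF_le tT; rewrite /pred_err /=.
have -> : forall s, 2 * (s / (2 * gamma t.+1)) = s / gamma t.+1.
  by move=> s; field; rewrite gt_eqF.
rewrite ler_pdivrMr //; lra.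
Qed.

Lemma regret_tail_bound :
  \sum_(1 <= t < T.+1) (2 * pred_err t - gamma t.-2 * move_sq t / 4)
    + g0 * (\sum_(1 <= t < T.+1) move_sq t) / 8 <= sqvar tau_T / g0.
Proof.
have [/andP[_ tau_le] _ tau_max] := tau_spec.
rewrite mulr_sumr mulr_suml -big_split /=.
apply: (@le_trans _ _ (\sum_(1 <= t < tau_T.+1) 2 * pred_err t)).
  rewrite [leRHS](big_nat_widen _ _ T.+1) // [leRHS]big_mkcond /=.
  apply: ler_sum_nat => t tr.
  have g0P : g0 * move_sq t <= gamma t.-2 * move_sq t.
    by rewrite ler_wpM2r ?move_sq_ge0 ?gam_ge.
  have := mulr_ge0 (gam_ge0 t.-2) (move_sq_ge0 t).
  case: ifP => [_ | /negbT]; first lra.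
  rewrite ltnS => /(contraNN (tau_max t tr)); rewrite -ltNge => /(pred_err_tail tr).
  lra.
rewrite /sqvar mulr_suml; apply: ler_sum_nat => t _.
have -> : 2 * pred_err t = sqn (dF t) / gamma t.-1.
  by rewrite /pred_err; field; rewrite gt_eqF ?gam_gt0.
by rewrite ler_wpM2l ?dotpp_ge0 // lef_pV2 ?posrE ?gam_gt0 ?gam_ge.
Qed.

Lemma gam_last_bound D :
  gamma T.-1 / 2 * D ^+ 2 <= g0 / 2 * D ^+ 2 + (2 * g0)^-1 * (D ^+ 4 / eta ^+ 2) * beta ^+ 2
                             + g0 * (\sum_(1 <= t < T.+1) move_sq t) / 8.
Proof.
set Q := \sum_(_ <= t < _) _.
have Q_ge0 : 0 <= Q by apply: sumr_ge0 => t _; apply: move_sq_ge0.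
have sqvar_le : sqvar T <= beta ^+ 2 * Q.
  by rewrite /sqvar mulr_sumr; apply: ler_sum_nat => t /andP[_ tT]; apply: sqn_dF_le.
have y_ge0 : 0 <= eta * (gamma T.-1 - g0) by rewrite mulr_ge0 ?subr_ge0 ?gam_ge // ltW.
have c_ge0 : 0 <= D ^+ 2 / eta by rewrite divr_ge0 ?sqr_ge0 // ltW.
have := amgm_bound g0_gt0 c_ge0 y_ge0 Q_ge0
  (le_trans (le_trans (gam_excess_sqr T.-1) (sqvar_homo (leq_pred T))) sqvar_le).
have -> : gamma T.-1 / 2 * D ^+ 2 = g0 / 2 * D ^+ 2 + eta * (gamma T.-1 - g0) * (D ^+ 2 / eta) / 2.
  by field; rewrite gt_eqF.
have -> : (2 * g0)^-1 * (D ^+ 4 / eta ^+ 2) * beta ^+ 2 = (D ^+ 2 / eta) ^+ 2 * beta ^+ 2 / (2 * g0).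
  by field; rewrite !gt_eqF.
lra.
Qed.

Lemma sqvar_tau_le :
  sqvar tau_T <= 8 * beta ^+ 2 * eta ^+ 2 + sqn (dF tau_T) + sqn (dF tau_T.-1).
Proof. by have [/andP[tau_gt0 _] tau_thr _] := tau_spec; apply: sqvar_le_of_gm2. Qed.

Lemma adapeg_regret_le D u : X u -> sqn (u - x 0) <= D ^+ 2 ->
  \sum_(1 <= t < T.+1) dotp (F (x t)) (x t - u) <=
    (2 * g0)^-1 * (D ^+ 4 / eta ^+ 2) * beta ^+ 2 + g0 / 2 * D ^+ 2
    + 8 / g0 * beta ^+ 2 * eta ^+ 2
    + g0^-1 * sqn (dF tau_T) + g0^-1 * sqn (dF tau_T.-1).
Proof.
move=> Xu Du.
have := regret_bound Xu Du; have := gam_last_bound D; have := regret_tail_bound.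
have inv_g0_ge0 : 0 <= g0^-1 by rewrite invr_ge0 ltW.
have := ler_wpM2r inv_g0_ge0 sqvar_tau_le; lra.
Qed.

End AdaPEG.

Theorem lemmaC14 (R : realType) (d : nat) (X : set 'rV[R]_d)
  (F : 'rV[R]_d -> 'rV[R]_d) (beta g0 eta D : R) (T : nat)
  (x z : nat -> 'rV[R]_d) :
  X !=set0 -> closed X -> convex_set X ->
  monotone_on X F -> 0 <= beta -> smooth_on X F beta ->
  0 < g0 -> 0 < eta -> 0 < D -> (1 <= T)%N ->
  AdaPEG_iterates X F eta g0 T x z ->
  let tt := tau F x eta g0 beta T in
  ErrD X F (x 0%N) D (xbar x T) <=
    (T%:R)^-1 * ((2 * g0)^-1 * (D ^+ 4 / eta ^+ 2) * beta ^+ 2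
                 + g0 / 2 * D ^+ 2
                 + 8 / g0 * beta ^+ 2 * eta ^+ 2
                 + g0^-1 * enorm (F (x tt) - F (x tt.-1)) ^+ 2
                 + g0^-1 * enorm (F (x tt.-1) - F (x tt.-2)) ^+ 2).
Proof.
(* Nonemptiness and closedness of X only guarantee that the argmins exist. *)
move=> _ _ convX monoF beta_ge0 smoothF g0_gt0 eta_gt0 D_gt0 T_gt0 iter /=.
have Xx0 := iterate_in iter (leq0n T).
apply: ge_sup.
  exists (dotp (F (x 0)) (xbar x T - x 0)), (x 0) => //.
  by split; rewrite // subrr /enorm dotp0l sqrtr0 ltW.
move=> _ [u [Xu Du] <-].
have Du2 : sqn (u - x 0) <= D ^+ 2.
  by rewrite -enorm_sqr ler_sqr ?nnegrE ?enorm_ge0 ?(ltW D_gt0).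
rewrite dotp_xbar // ler_wpM2l ?invr_ge0 ?ler0n // !enorm_sqr.
apply: le_trans (adapeg_regret_le convX beta_ge0 smoothF g0_gt0 eta_gt0 T_gt0 iter Xu Du2).
apply: ler_sum_nat => t /andP[_ tT].
have := monoF _ _ (iterate_in iter tT) Xu; rewrite dotpBl; lra.
Qed.
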